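(* Let $(\Omega,\Sigma,\mathbb{P})$ be a probability space, let $\gamma<0$, and let $W_t:\Omega\to(0,\infty)$, $t\in\mathbb{N}$, be random variables with $E[W_t^\gamma]<\infty$ for all $t$. Define $$C:=\liminf_{t\to\infty}\frac{1}{t}\,\frac{1}{\gamma}\log\big(E[W_t^\gamma]\big).$$ Then $$\liminf_{t\to\infty}\frac{1}{t}\log W_t\geq C\quad\text{almost surely.}$$ Moreover, if $C>0$, then for every $b\in[0,\infty)$ the hitting time $T_b:=\inf\{t\in\mathbb{N}: W_t>b\}$ is integrable and $$\limsup_{b\to+\infty}\frac{E[T_b]}{\log b}\leq\frac{1}{C}.$$
   Context: $\log$ is the natural logarithm. $C$ takes values in $[-\infty,+\infty]$; if $C=+\infty$ then $1/C:=0$. *)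

From HB Require Import structures.
From mathcomp Require Import all_boot all_order all_algebra.
From mathcomp Require Import all_classical all_reals all_analysis.
Set Implicit Arguments. Unset Strict Implicit. Unset Printing Implicit Defensive.
Import Order.TTheory GRing.Theory Num.Theory.
Local Open Scope classical_set_scope.
Local Open Scope ring_scope.

Definition hitting_time (R : realType) (Omega : Type) (W : nat -> Omega -> R)
  (b : R) (w : Omega) : \bar R :=
  match pselect (exists t : nat, b < W t w) with
  | left H => ((ex_minn H)%:R)%:E
  | right _ => +oo%E
  end.

(* C := liminf_t (1/t) (1/gamma) log E[W_t^gamma], in the extended reals.
   (E[W_t^gamma] is assumed finite, so fine is harmless; the t = 0 term
   does not affect the liminf.) *)
Definition growth_const (d : measure_display) (Omega : measurableType d)
  (R : realType) (P : probability Omega R) (gamma : R) (W : nat -> Omega -> R)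
  : \bar R :=
  limn_einf (fun t : nat =>
    ((t%:R)^-1 * gamma^-1 * ln (fine ('E_P[fun w => W t w `^ gamma])))%:E).

From HB Require Import structures.
From mathcomp Require Import all_boot all_order all_algebra.
From mathcomp Require Import all_classical all_reals all_analysis.
From mathcomp Require Import measurable_realfun ring lra.
Import Order.TTheory GRing.Theory Num.Theory.
Local Open Scope classical_set_scope.
Import numFieldTopology.Exports.
Local Open Scope ring_scope.

(* For c < C and large t, Markov's inequality for W_t^gamma gives
   P(W_t <= b) <= E[W_t^gamma] / b^gamma <= exp(gamma (c t - ln b)).
   With b = exp(c' t) and c' < c these probabilities are summable, so by
   Borel-Cantelli W_t > exp(c' t) eventually, almost surely.  For the hitting
   time, E[T_b] = sum_t P(T_b > t) <= sum_t P(W_t <= b); the terms are at most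
   1 up to t = ln b / c + N and decay geometrically afterwards, whence
   E[T_b] <= ln b / c + O(1). *)

Section extended_real_limits.
Context {R : realType}.
Local Open Scope ereal_scope.

Lemma EFin_lt_dense {c : R} {x : \bar R} :
  c%:E < x -> exists2 c' : R, (c < c')%R & c'%:E < x.
Proof.
case: x => [x||] //; last by exists (c + 1)%R; rewrite ?ltrDl ?ltry.
by rewrite lte_fin => cx; exists ((c + x) / 2)%R; rewrite ?lte_fin; lra.
Qed.

Lemma limf_esup_le_near {T : choiceType} {X : filteredType T} (F : set_system X)
    (f : X -> \bar R) (l : \bar R) :
  (\forall x \near F, f x <= l) -> limf_esup f F <= l.
Proof.
move=> fl; rewrite limf_esupE.
apply: (le_trans (ereal_inf_lbound _)); first by exists [set x | f x <= l].
by apply: ge_ereal_sup => _ [x fxl <-].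
Qed.

Lemma limn_einf_ge_near (u : (\bar R)^nat) (c : \bar R) :
  (\forall t \near \oo, c <= u t) -> c <= limn_einf u.
Proof.
move=> cu; rewrite /limn_einf leeNr; apply: limf_esup_le_near.
by apply: filterS cu => t; rewrite /= leeN2.
Qed.

Lemma limn_einf_gt_near (u : (\bar R)^nat) (c : \bar R) :
  c < limn_einf u -> \forall t \near \oo, c < u t.
Proof.
have -> : limn_einf u = limf_einf u \oo by [].
rewrite limf_einfE => /ereal_sup_gt[_ [V [n _ nV] <-]] cV.
exists n => // t nt; apply: (lt_le_trans cV).
by apply: ereal_inf_lbound; exists t => //; exact: nV.
Qed.

End extended_real_limits.

Section extended_real_bounds.
Context {R : realType}.
Local Open Scope ereal_scope.

Lemma nneseries_geometric_le (x : R) : (0 < x)%R -> (x < 1)%R ->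
  \sum_(k <oo) (x ^+ k)%:E <= ((1 - x)^-1)%:E.
Proof.
move=> x0 x1; apply: lime_le.
  by apply: is_cvg_nneseries => n _ _; rewrite lee_fin exprn_ge0 // ltW.
apply: nearW => n; rewrite sumEFin lee_fin.
have := @geometric_le_lim R n 1 x ler01 x0.
rewrite ger0_norm ?(ltW x0) // mul1r => /(_ x1).
suff -> : (\sum_(0 <= i < n) x ^+ i = series (geometric 1 x) n)%R by [].
by apply: eq_bigr => i _; rewrite /= mul1r.
Qed.

Lemma nneseries_le_geometric_tail (u : nat -> \bar R) (M : nat) (r : R) :
  (0 < r)%R -> (r < 1)%R -> (forall t, 0 <= u t) -> (forall t, u t <= 1) ->
  (forall t, (M <= t)%N -> u t <= (r ^+ (t - M))%:E) ->
  \sum_(t <oo) u t <= (M%:R + (1 - r)^-1)%:E.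
Proof.
move=> r0 r1 u0 u1 uM.
rewrite (@nneseries_split _ _ 0 M) // add0n EFinD; apply: leeD.
  apply: (@le_trans _ _ (\sum_(0 <= k < M) (1:R)%:E)).
    by apply: lee_sum => i _; exact: u1.
  by rewrite sumEFin sumr_const_nat subn0.
rewrite -nneseries_addn //; apply: (le_trans _ (nneseries_geometric_le _ r0 r1)).
apply: lee_nneseries => [i _ _|n _]; first exact: u0.
by rewrite (le_trans (uM _ _)) ?leq_addl // addnK.
Qed.

Lemma lee_inve_from_below (x y : \bar R) : 0 < x ->
  (forall c : R, (0 < c)%R -> c%:E < x -> y <= (c^-1)%:E) -> y <= x^-1.
Proof.
case: x => [x||] //= x0 yc; apply/lee_addgt0Pr => eps eps0.
- rewrite lte_fin in x0; rewrite inver gt_eqF // -EFinD.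
  have xe : (0 < x^-1 + eps)%R by rewrite addr_gt0 ?invr_gt0.
  rewrite -[(x^-1 + eps)%R]invrK; apply: yc; first by rewrite invr_gt0.
  rewrite lte_fin -[x in (_ < x)%R]invrK ltf_pV2 ?posrE ?invr_gt0 //.
  by rewrite ltrDl.
- by rewrite add0e -[eps]invrK yc ?ltry // invr_gt0.
Qed.

End extended_real_bounds.

Lemma le_mul_truncnS {R : archiRealFieldType} (x c : R) : 0 < c ->
  x <= c * (Num.truncn (x / c)).+1%:R.
Proof.
by move=> c0; rewrite mulrC -ler_pdivrMr //; exact/ltW/truncnS_gt.
Qed.

Section almost_everywhere.
Context {d} {T : measurableType d} {R : realType} (mu : {measure set T -> \bar R}).
Local Open Scope ereal_scope.

Lemma ae_eventually_not (F : nat -> set T) : (forall n, measurable (F n)) ->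
  \sum_(n <oo) mu (F n) < +oo -> {ae mu, forall w, \forall n \near \oo, ~ F n w}.
Proof.
move=> mF /(lim_sup_set_cvg0 mF) F0; exists (lim_sup_set F); split => //.
  by apply: bigcapT_measurable => n; apply: bigcup_measurable => j _.
move=> w /= nev n _; apply: contrapT => nFw; apply: nev.
by exists n => // j /= nj Fj; apply: nFw; exists j.
Qed.

Lemma ae_ge_of_lt (x : \bar R) (f : T -> \bar R) :
  (forall c : R, c%:E < x -> {ae mu, forall w, c%:E <= f w}) ->
  {ae mu, forall w, x <= f w}.
Proof.
case: x => [r||] cf; last by apply: aeW => w; exact: leNye.
- have rk k : (r - k.+1%:R^-1)%:E < r%:E.
    by rewrite lte_fin gtrDl oppr_lt0 invr_gt0.
  apply: filterS (ae_foralln (fun k => cf _ (rk k))) => w.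
  case: (f w) => [y||] fw; [|exact: leey|by have := fw 0%N].
  rewrite lee_fin; apply/ler_addgt0Pr => eps eps0.
  have := fw (Num.truncn eps^-1); rewrite lee_fin.
  have : ((Num.truncn eps^-1).+1%:R^-1 < eps)%R.
    by rewrite -[X in (_ < X)%R]invrK ltf_pV2 ?posrE ?invr_gt0 // truncnS_gt.
  move: ((Num.truncn eps^-1).+1%:R^-1)%R => q; lra.
- apply: filterS (ae_foralln (fun k => cf k%:R (ltry _))) => w fw.
  suff -> : f w = +oo by [].
  apply: eq_infty => r; apply: le_trans (fw (Num.truncn r).+1).
  by rewrite lee_fin ltW // truncnS_gt.
Qed.

End almost_everywhere.

Section hitting_time_series.
Context {R : realType} {Omega : Type} (W : nat -> Omega -> R) (b : R).

Definition stays_below (t : nat) : set Omega :=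
  [set w | forall s, (s <= t)%N -> W s w <= b].

Lemma hitting_time_nneseries w :
  hitting_time W b w = (\sum_(t <oo) (\1_(stays_below t) w)%:E)%E.
Proof.
have ind0 t : (0 <= (\1_(stays_below t) w : R)%:E)%E.
  by rewrite lee_fin indicE ler0n.
rewrite /hitting_time; case: pselect => [hit|nohit].
  case: ex_minnP => m Wm m_min.
  rewrite (@nneseries_split _ _ 0 m) // add0n eseries0 ?adde0; last first.
    move=> i mi _; rewrite indicE memNset //= => /(_ m mi).
    by rewrite leNgt Wm.
  have -> : m%:R%:E = (\sum_(0 <= k < m) (1 : R)%:E)%E.
    by rewrite sumEFin sumr_const_nat subn0.
  apply: eq_big_nat => i /andP[_ im].
  rewrite indicE mem_set // => s si; rewrite leNgt; apply/negP => /m_min ms.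
  by move: (leq_ltn_trans (leq_trans ms si) im); rewrite ltnn.
have partial n : (\sum_(0 <= k < n) (\1_(stays_below k) w : R)%:E)%E = n%:R%:E.
  transitivity (\sum_(0 <= k < n) (1 : R)%:E)%E.
    apply: eq_big_nat => i _.
    rewrite indicE mem_set // => s _; rewrite leNgt.
    by apply/negP => bW; apply: nohit; exists s.
  by rewrite sumEFin sumr_const_nat subn0.
rewrite (eq_fun partial); apply/esym/cvg_lim => //; apply/cvgenyP; exact: cvg_id.
Qed.

Lemma hitting_time_ge0 w : (0 <= hitting_time W b w)%E.
Proof. by rewrite /hitting_time; case: pselect => [H|H]; rewrite ?lee_fin ?leey. Qed.

End hitting_time_series.

Lemma measurable_sublevel {d} {T : measurableType d} {R : realType} (f : T -> R)
    (b : R) :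
  measurable_fun setT f -> measurable [set w | f w <= b].
Proof.
move=> mf; have := measurable_fun_le measurableT mf (measurable_cst b).
by rewrite setTI.
Qed.

Section hitting_time_integral.
Context d (Omega : measurableType d) (R : realType)
  (mu : {measure set Omega -> \bar R}) (W : nat -> Omega -> R) (b : R).
Hypothesis mW : forall t, measurable_fun setT (W t).

Lemma measurable_stays_below t : measurable (stays_below W b t).
Proof.
rewrite (_ : stays_below W b t =
    \bigcap_(s in [set s | (s <= t)%N]) [set w | W s w <= b]).
  by apply: bigcap_measurable; [exists 0%N | move=> s _; exact: measurable_sublevel].
by apply/seteqP; split => w Ww s; exact: Ww.
Qed.

Lemma measurable_indic_stays_below t :
  measurable_fun setT (fun w => (\1_(stays_below W b t) w : R)%:E).
Proof. exact/measurable_EFinP/measurable_indic/measurable_stays_below. Qed.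

Lemma measurable_hitting_time : measurable_fun setT (hitting_time W b).
Proof.
rewrite (funext (hitting_time_nneseries W b)).
apply: ge0_emeasurable_sum => [k x _ _|k _]; last exact: measurable_indic_stays_below.
by rewrite lee_fin indicE ler0n.
Qed.

Lemma integral_hitting_time :
  (\int[mu]_w hitting_time W b w = \sum_(t <oo) mu (stays_below W b t))%E.
Proof.
under eq_integral do rewrite hitting_time_nneseries.
rewrite integral_nneseries //; last exact: measurable_indic_stays_below.
apply: eq_eseriesr => t _.
by rewrite integral_indic ?setIT //; exact: measurable_stays_below.
Qed.

End hitting_time_integral.

Lemma markov_powR_neg {d} {T : measurableType d} {R : realType}
    (mu : {measure set T -> \bar R}) {f : T -> R} {gamma b : R} :
  gamma < 0 -> 0 < b -> measurable_fun setT f -> (forall w, 0 < f w) ->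
  (mu [set w | f w <= b]%R * (b `^ gamma)%:E <= \int[mu]_w (f w `^ gamma)%:E)%E.
Proof.
move=> gamma_lt0 b_gt0 mf f_gt0; set A := [set w | f w <= b].
have mA : measurable A by exact: measurable_sublevel.
rewrite -[A]setIT -integral_indic // muleC.
rewrite -(integralZl_indic measurableT (fun _ => A)) //; last first.
  by move=> /ltW; rewrite leNgt powR_gt0.
apply: ge0_le_integral => //.
- by move=> x _; rewrite lee_fin indicE mulr_ge0 ?powR_ge0 ?ler0n.
- by apply/measurable_EFinP/measurable_funM => //; exact: measurable_indic.
- exact/measurable_EFinP/(measurableT_comp (measurable_powR gamma)).
move=> x _; rewrite lee_fin indicE.
have [xA|_] := boolP (x \in A); last by rewrite mulr0 powR_ge0.
rewrite mulr1 /powR !gt_eqF ?f_gt0 // ler_expR ler_nM2l //.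
by rewrite ler_ln ?posrE ?f_gt0 //; move: xA; rewrite inE.
Qed.

Section growth_rate.
Context d (Omega : measurableType d) (R : realType) (P : probability Omega R)
  (gamma : R) (W : nat -> Omega -> R).
Hypothesis gamma_lt0 : gamma < 0.
Hypothesis mW : forall t, measurable_fun setT (W t).
Hypothesis W_gt0 : forall t w, 0 < W t w.
Hypothesis moment_lty : forall t, ('E_P[fun w => (W t w `^ gamma)%R] < +oo)%E.

Local Notation C := (growth_const P gamma W).

Let moment t := fine ('E_P[fun w => (W t w `^ gamma)%R])%E.

Lemma integral_powR_moment t :
  (\int[P]_w (W t w `^ gamma)%:E = (moment t)%:E)%E.
Proof.
have Efin := moment_lty t; rewrite unlock in Efin *.
rewrite /moment unlock fineK // ge0_fin_numE //.
by apply: integral_ge0 => w _; rewrite lee_fin powR_ge0.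
Qed.

Lemma moment_lt_expR c : (c%:E < C)%E ->
  \forall t \near \oo, moment t < expR (gamma * c * t%:R).
Proof.
move=> /limn_einf_gt_near; apply: filter_app; exists 1%N => // t /= t_gt0.
rewrite lte_fin => ct.
have [mt_le0|mt_gt0] := leP (moment t) 0; first exact: le_lt_trans mt_le0 (expR_gt0 _).
rewrite -[moment t]lnK ?posrE // ltr_expR.
move: ct; set L := ln (moment t); set y := (_ * L) => cy.
have tR_gt0 : 0 < t%:R :> R by rewrite ltr0n.
have -> : L = y * (gamma * t%:R).
  by rewrite /y; field; rewrite ltr0_neq0 // lt0r_neq0.
have : gamma * t%:R < 0 by rewrite pmulr_llt0.
nra.
Qed.

Lemma prob_le_lt_expR c : (c%:E < C)%E ->
  \forall t \near \oo, forall b, 0 < b ->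
    (P [set w | W t w <= b]%R <= (expR (gamma * (c * t%:R - ln b)))%:E)%E.
Proof.
move=> /moment_lt_expR; apply: filterS => t mt b b_gt0.
have := markov_powR_neg P gamma_lt0 b_gt0 (mW t) (W_gt0 t).
rewrite integral_powR_moment -lee_pdivlMr ?powR_gt0 // => /le_trans; apply.
rewrite -EFinM lee_fin mulrBr mulrA expRB /powR gt_eqF //.
by rewrite ler_pM2r ?invr_gt0 ?expR_gt0 // ltW.
Qed.

Lemma ae_eventually_expR_lt c : (c%:E < C)%E ->
  {ae P, forall w, \forall t \near \oo, expR (c * t%:R) < W t w}.
Proof.
move=> /EFin_lt_dense[c' cc' c'C]; have [N _ PN] := prob_le_lt_expR c' c'C.
set F := fun t => [set w | W t w <= expR (c * t%:R)].
have mF t : measurable (F t) by exact: measurable_sublevel.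
set r := expR (gamma * (c' - c)).
have r_gt0 : 0 < r := expR_gt0 _.
have r_lt1 : r < 1 by rewrite expR_lt1 pmulr_llt0 // subr_gt0.
have : (\sum_(t <oo) P (F t) < +oo)%E.
  apply: le_lt_trans (nneseries_le_geometric_tail _ N _ r_gt0 r_lt1 _ _ _) (ltry _).
  - by move=> t; exact: measure_ge0.
  - by move=> t; exact: probability_le1.
  move=> t Nt; apply: le_trans (PN t Nt _ (expR_gt0 _)) _; rewrite expRK lee_fin.
  have -> : gamma * (c' * t%:R - c * t%:R) = t%:R * (gamma * (c' - c)) by ring.
  rewrite expRM_natl -/r -{1}(subnK Nt) exprD -[leRHS]mulr1 ler_pM2l ?exprn_gt0 //.
  by rewrite exprn_ile1 // ltW.
move=> /(ae_eventually_not P F mF); apply: filterS => w; apply: filterS => t.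
by move=> /negP; rewrite -ltNge.
Qed.

Lemma ae_ge_liminf c : (c%:E < C)%E ->
  {ae P, forall w, (c%:E <= limn_einf (fun t => ((t%:R)^-1 * ln (W t w))%:E))%E}.
Proof.
move=> /ae_eventually_expR_lt; apply: filterS => w cW.
apply: limn_einf_ge_near; apply: filter_app cW; exists 1%N => // t /= t_gt0.
rewrite lee_fin -ltr_ln ?posrE ?expR_gt0 // expRK => ct.
by rewrite ler_pdivlMl ?ltr0n // mulrC ltW.
Qed.

Lemma integral_hitting_time_le c : 0 < c -> (c%:E < C)%E ->
  exists2 K : R, 0 <= K & forall (b : R) (t0 : nat), 0 <= b -> ln b <= c * t0%:R ->
    (\int[P]_w hitting_time W b w <= (t0%:R + K)%:E)%E.
Proof.
move=> c_gt0 cC; have [N _ PN] := prob_le_lt_expR c cC.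
set r := expR (gamma * c).
have r_gt0 : 0 < r := expR_gt0 _.
have r_lt1 : r < 1 by rewrite expR_lt1 pmulr_llt0.
exists (N%:R + (1 - r)^-1); first by rewrite addr_ge0 // invr_ge0 subr_ge0 ltW.
move=> b t0 b_ge0 bt0; rewrite integral_hitting_time // addrA -natrD.
apply: nneseries_le_geometric_tail r_gt0 r_lt1 _ _ _ => [t|t|t Mt].
- exact: measure_ge0.
- by apply: probability_le1; exact: measurable_stays_below.
move: b_ge0; rewrite le0r => /orP[/eqP b0|b_gt0].
  have -> : stays_below W b t = set0.
    by apply/seteqP; split => // w /(_ 0%N (leq0n t)); rewrite b0 leNgt W_gt0.
  by rewrite measure0 lee_fin exprn_ge0 // expR_ge0.
have Nt : (N <= t)%N by apply: leq_trans Mt; rewrite leq_addl.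
have stays_le : (P (stays_below W b t) <= P [set w | W t w <= b]%R)%E.
  apply: le_measure; rewrite ?inE; first exact: measurable_stays_below.
    exact: measurable_sublevel.
  by move=> w /(_ t (leqnn t)).
apply: (le_trans stays_le); apply: (le_trans (PN t Nt b b_gt0)).
rewrite lee_fin /r -expRM_natl ler_expR natrB // natrD.
have : 0 <= - gamma * (c * t0%:R + c * N%:R - ln b).
  apply: mulr_ge0; first by rewrite oppr_ge0 ltW.
  have := mulr_ge0 (ltW c_gt0) (ler0n _ N); lra.
nra.
Qed.

Lemma hitting_time_integrable : (0 < C)%E ->
  forall b, 0 <= b -> P.-integrable setT (hitting_time W b).
Proof.
move=> C_gt0 b b_ge0; have [c c_gt0 cC] := EFin_lt_dense C_gt0.
have [K _ TK] := integral_hitting_time_le c c_gt0 cC.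
apply/integrableP; split; first exact: measurable_hitting_time.
under eq_integral do rewrite gee0_abs ?hitting_time_ge0 //.
exact: le_lt_trans (TK b _ b_ge0 (le_mul_truncnS (ln b) c c_gt0)) (ltry _).
Qed.

Lemma limsup_hitting_time_le c : 0 < c -> (c%:E < C)%E ->
  (limf_esup (fun b : R => (\int[P]_w hitting_time W b w) / (ln b)%:E) (+oo)%R
    <= (c^-1)%:E)%E.
Proof.
move=> c_gt0 cC; have [K K_ge0 TK] := integral_hitting_time_le c c_gt0 cC.
apply/lee_addgt0Pr => eps eps_gt0; apply: limf_esup_le_near.
apply: filterS (nbhs_pinfty_gt (num_real (expR ((K + 1) / eps)))) => b Lb.
have b_gt0 : 0 < b := lt_trans (expR_gt0 _) Lb.
have {}Lb : K + 1 < eps * ln b by rewrite mulrC -ltr_pdivrMr // -ltr_expR lnK.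
have lnb_gt0 : 0 < ln b.
  by rewrite -(pmulr_rgt0 _ eps_gt0); apply: le_lt_trans Lb; rewrite addr_ge0.
set t0 := (Num.truncn (ln b / c)).+1.
have t0_le : t0%:R <= ln b / c + 1.
  by rewrite /t0 -addn1 natrD lerD2r truncn_le divr_ge0 // ltW.
rewrite inver gt_eqF //.
apply: le_trans (lee_wpmul2r _ (TK b t0 (ltW b_gt0) (le_mul_truncnS (ln b) c c_gt0))) _.
  by rewrite lee_fin invr_ge0 ltW.
rewrite -EFinM -EFinD lee_fin ler_pdivrMr // mulrDl.
move: t0_le; rewrite mulrC; nra.
Qed.

End growth_rate.

Theorem theorem3 (d : measure_display) (Omega : measurableType d)
  (R : realType) (P : probability Omega R) (gamma : R) (W : nat -> Omega -> R) :
  (gamma < 0)%R ->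
  (forall t, measurable_fun setT (W t)) ->
  (forall t w, (0 < W t w)%R) ->
  (forall t, ('E_P[fun w => (W t w `^ gamma)%R] < +oo)%E) ->
  {ae P, forall w, (growth_const P gamma W <=
       limn_einf (fun t : nat => ((t%:R)^-1 * ln (W t w))%R%:E))%E}
  /\
  ((0 < growth_const P gamma W)%E ->
     (forall b : R, (0 <= b)%R -> P.-integrable setT (hitting_time W b))
     /\
     (limf_esup (fun b : R =>
         ((\int[P]_w hitting_time W b w) / (ln b)%R%:E)%E) (+oo)%R
       <= (growth_const P gamma W)^-1)%E).
Proof.
move=> gamma_lt0 mW W_gt0 moment_lty; split.
  apply: ae_ge_of_lt => c.
  exact: ae_ge_liminf gamma_lt0 mW W_gt0 moment_lty c.
move=> C_gt0; split.
  exact: hitting_time_integrable gamma_lt0 mW W_gt0 moment_lty C_gt0.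
apply: lee_inve_from_below => // c c_gt0.
exact: limsup_hitting_time_le gamma_lt0 mW W_gt0 moment_lty c c_gt0.
Qed.
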